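(* Suppose $d=1$ and let $\lambda\in\mathbb R$. Then $L,(L^*+\lambda)^2$ is a Leonard pair on $\mathcal P_d(\mathbb R)$ if and only if $2\lambda\neq-1$.
   Context: Let $r,s\in(-1,\infty)$. Write $(x)_i=x(x+1)\cdots(x+i-1)$, $(x)_0=1$. For $0\le i\le d$ put $\theta_i=(d-i)(d-i+r+s+1)$ (distinct) and $\theta^*_i=i$. Put $b^*_i=\frac{(d-i)(i-d-s)(2d-2i+r+s+2)_i}{(2d-2i+r+s)_{i+1}}$ ($0\le i\le d-1$), $c^*_i=\frac{i(i-d-r-1)(d-i+r+s+1)_{d-i}}{(d-i+r+s+2)_{d-i+1}}$ ($1\le i\le d$), $b^*_d=c^*_0=0$, and $a^*_i=\theta^*_0-b^*_i-c^*_i$. Let $\mathcal P_d(\mathbb R)$ be the real polynomials of degree at most $d$, each determined by its values at $\theta_0,\dots,\theta_d$. Let $L,L^*$ be the linear maps on $\mathcal P_d(\mathbb R)$ with $(Lf)(\theta_i)=\theta_i f(\theta_i)$ and $(L^*f)(\theta_i)=b^*_i f(\theta_{i+1})+a^*_i f(\theta_i)+c^*_i f(\theta_{i-1})$ ($0\le i\le d$; terms with coefficient $b^*_d$ or $c^*_0$ omitted); $\lambda$ stands for $\lambda$ times the identity. A square matrix is irreducible tridiagonal if its nonzero entries lie on the diagonal, subdiagonal or superdiagonal and all subdiagonal and superdiagonal entries are nonzero. A Leonard pair on a nonzero finite-dimensional vector space $V$ is an ordered pair $A,A^*$ of linear maps on $V$ such that there is an ordered basis in which $A$ is diagonal and $A^*$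 is irreducible tridiagonal, and there is an ordered basis in which $A^*$ is diagonal and $A$ is irreducible tridiagonal. *)

From HB Require Import structures.
From mathcomp Require Import all_boot all_order all_algebra.
From mathcomp Require Import reals.
Set Implicit Arguments. Unset Strict Implicit. Unset Printing Implicit Defensive.
Import Order.TTheory GRing.Theory Num.Theory.
Local Open Scope ring_scope.

Definition irr_tridiag (K : fieldType) (n : nat) (M : 'M[K]_n) : Prop :=
  forall i j : 'I_n,
    (((i.+1 < j)%N || (j.+1 < i)%N) -> M i j = 0) /\
    (((i.+1 == j)%N || (j.+1 == i)%N) -> M i j != 0).

Definition leonard_pair (K : fieldType) (V : vectType K) (A As : 'End(V)) : Prop :=
  (0 < \dim {:V})%N /\
  (exists e : (\dim {:V}).-tuple V,
      basis_of fullv e /\ is_diag_mx (passmx.mxof e e A) /\ irr_tridiag (passmx.mxof e e As)) /\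
  (exists e : (\dim {:V}).-tuple V,
      basis_of fullv e /\ is_diag_mx (passmx.mxof e e As) /\ irr_tridiag (passmx.mxof e e A)).

Section Data.
Variables (R : realType) (r s : R) (d : nat).

Definition poch (x : R) (i : nat) : R := \prod_(k < i) (x + k%:R).

Definition theta (i : nat) : R :=
  (d%:R - i%:R) * (d%:R - i%:R + r + s + 1).
Definition thetas (i : nat) : R := i%:R.

Definition bs (i : nat) : R :=
  if (i < d)%N then
    (d%:R - i%:R) * (i%:R - d%:R - s)
      * poch (2 * d%:R - 2 * i%:R + r + s + 2) i
      / poch (2 * d%:R - 2 * i%:R + r + s) i.+1
  else 0.

Definition cs (i : nat) : R :=
  if (0 < i)%N then
    i%:R * (i%:R - d%:R - r - 1)
      * poch (d%:R - i%:R + r + s + 1) (d - i)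
      / poch (d%:R - i%:R + r + s + 2) (d - i).+1
  else 0.

Definition as_ (i : nat) : R := thetas 0 - bs i - cs i.

(* P_d(R): real polynomials of degree at most d *)
Definition Pd := {poly_(d.+1) R}.

Definition interp (v : nat -> R) : Pd :=
  npolyp d.+1 (\sum_(i < d.+1) v i *:
     \prod_(j < d.+1 | j != i) ((theta i - theta j)^-1 *: ('X - (theta j)%:P))).

Definition Lop : 'End(Pd) :=
  linfun (fun f : Pd => interp (fun i => theta i * (polyn f).[theta i])).

Definition Lsop : 'End(Pd) :=
  linfun (fun f : Pd => interp (fun i =>
     (if (i < d)%N then bs i * (polyn f).[theta i.+1] else 0)
     + as_ i * (polyn f).[theta i]
     + (if (0 < i)%N then cs i * (polyn f).[theta i.-1] else 0))).

End Data.

(* For d = 1 a polynomial of P_1 is determined by its values at theta_0 = r + s + 2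
   and theta_1 = 0.  In these coordinates L = diag(theta_0, 0) and
   L* = [[p, -p], [-q, q]] with p = (1 + s)/theta_0, q = (1 + r)/theta_0, p + q = 1,
   so L* is idempotent with eigenvalues theta*_0 = 0 and theta*_1 = 1, and
   (L* + lam)^2 = (1 + 2 lam) L* + lam^2.  If 1 + 2 lam = 0 this is a scalar map,
   which is irreducible tridiagonal in no basis.  Otherwise it is a nonzero multiple
   of L* plus a scalar: in the evaluation basis L is diagonal and it is irreducible
   tridiagonal, while in the eigenbasis of L* it is diagonal and L is irreducible
   tridiagonal. *)

From HB Require Import structures.
From mathcomp Require Import all_boot all_order all_algebra.
From mathcomp Require Import reals ring.
Set Implicit Arguments. Unset Strict Implicit. Unset Printing Implicit Defensive.
Import Order.TTheory GRing.Theory Num.Theory.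
Local Open Scope ring_scope.

Lemma mxofE (K : fieldType) (V : vectType K) (e : (\dim {:V}).-tuple V)
    (F : 'End(V)) (i j : 'I_(\dim {:V})) :
  passmx.mxof e e F i j = coord e j (F e`_i).
Proof. by rewrite /passmx.mxof !mxE /= passmx.vecof_delta. Qed.

Lemma scalar_lfun_not_irr_tridiag (K : fieldType) (V : vectType K)
    (e : (\dim {:V}).-tuple V) (a : K) :
  free e -> (1 < \dim {:V})%N -> ~ irr_tridiag (passmx.mxof e e (a *: \1)%VF).
Proof.
move=> fr n1 /(_ (Ordinal (ltnW n1)) (Ordinal n1)) [_ /(_ isT)].
rewrite mxofE scale_lfunE id_lfunE linearZ /=.
by rewrite (coord_free (Ordinal (ltnW n1))) // mulr0 eqxx.
Qed.

Lemma linfunE_linear (K : fieldType) (aT rT : vectType K) (f : aT -> rT) :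
  linear f -> linfun f =1 f.
Proof.
move=> fL; pose F : {linear aT -> rT} :=
  HB.pack f (GRing.isSemilinear.Build K aT rT _ f (GRing.semilinear_linear fL)).
exact: (lfunE F).
Qed.

Lemma sqr_add_scalar_idem (K : fieldType) (V : vectType K) (F : 'End(V)) (a : K) :
  (F \o F = F)%VF ->
  ((F + a *: \1) \o (F + a *: \1) = (1 + 2 * a) *: F + a ^+ 2 *: \1)%VF.
Proof.
move=> FF; apply/lfunP => v.
rewrite !(comp_lfunE, add_lfunE, scale_lfunE, id_lfunE) linearD linearZ /=.
rewrite -comp_lfunE FF scalerDr scalerA -expr2 scalerDl scale1r mulr_natl mulr2n scalerDl.
by rewrite !addrA.
Qed.

Section TwoDimensional.
Variables (K : fieldType) (V : vectType K).
Hypothesis dimV : \dim {:V} = 2%N.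
Local Notation n := (\dim {:V}).

Lemma ord_dim2 (i : 'I_n) : i = 0%N :> nat \/ i = 1%N :> nat.
Proof. by case: i => -[|[|i]] /=; rewrite dimV; auto. Qed.

Definition pair_tuple (u0 u1 : V) : n.-tuple V :=
  @Tuple n V [:: u0; u1] (introT eqP (esym dimV)).

Section PairBasis.
Variables (u0 u1 : V).
Hypothesis free_u : free (pair_tuple u0 u1).
Local Notation e := (pair_tuple u0 u1).

Lemma coord_pair_tuple (j : 'I_n) a0 a1 :
  coord e j (a0 *: u0 + a1 *: u1) = if j == 0%N :> nat then a0 else a1.
Proof.
have n1 : (1 < n)%N by rewrite dimV.
rewrite linearD !linearZ /= (coord_free (Ordinal (ltnW n1))) //.
rewrite (coord_free (Ordinal n1)) // -!val_eqE /=.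
by case: (ord_dim2 j) => -> /=; rewrite ?mulr0 ?mulr1 ?addr0 ?add0r.
Qed.

Lemma mxof_pair_tuple (F : 'End(V)) a00 a01 a10 a11 :
  F u0 = a00 *: u0 + a01 *: u1 -> F u1 = a10 *: u0 + a11 *: u1 ->
  forall i j : 'I_n, passmx.mxof e e F i j =
    if i == 0%N :> nat then (if j == 0%N :> nat then a00 else a01)
    else (if j == 0%N :> nat then a10 else a11).
Proof.
move=> F0 F1 i j; rewrite mxofE.
by case: (ord_dim2 i) => -> /=; rewrite ?F0 ?F1 coord_pair_tuple.
Qed.

Lemma is_diag_mxof_pair_tuple (F : 'End(V)) a0 a1 :
  F u0 = a0 *: u0 -> F u1 = a1 *: u1 -> is_diag_mx (passmx.mxof e e F).
Proof.
move=> F0 F1; apply/is_diag_mxP => i j.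
rewrite (@mxof_pair_tuple F a0 0 0 a1) ?scale0r ?addr0 ?add0r //.
by case: (ord_dim2 i) => ->; case: (ord_dim2 j) => -> /=; rewrite ?eqxx.
Qed.

Lemma irr_tridiag_mxof_pair_tuple (F : 'End(V)) a00 a01 a10 a11 :
  F u0 = a00 *: u0 + a01 *: u1 -> F u1 = a10 *: u0 + a11 *: u1 ->
  a01 != 0 -> a10 != 0 -> irr_tridiag (passmx.mxof e e F).
Proof.
move=> F0 F1 a01_neq0 a10_neq0 i j; rewrite (mxof_pair_tuple F0 F1).
by case: (ord_dim2 i) => ->; case: (ord_dim2 j) => -> /=; split.
Qed.

End PairBasis.
End TwoDimensional.

Section DegreeOne.
Variables (R : realType) (r s : R).
Hypotheses (hr : -1 < r) (hs : -1 < s).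

Local Notation P1 := (Pd R 1).
Local Notation theta := (theta r s 1).
Local Notation N := (r + s + 2).
Local Notation p := ((1 + s) / N).
Local Notation q := ((1 + r) / N).

Lemma r1_gt0 : 0 < 1 + r.
Proof. by rewrite -(subrr 1) ltrD2l. Qed.

Lemma s1_gt0 : 0 < 1 + s.
Proof. by rewrite -(subrr 1) ltrD2l. Qed.

Lemma N_gt0 : 0 < N.
Proof. rewrite (_ : N = (1 + r) + (1 + s)); [exact: addr_gt0 r1_gt0 s1_gt0 | ring]. Qed.

Lemma p_gt0 : 0 < p.
Proof. exact: divr_gt0 s1_gt0 N_gt0. Qed.

Lemma q_gt0 : 0 < q.
Proof. exact: divr_gt0 r1_gt0 N_gt0. Qed.

Lemma N_neq0 : N != 0.
Proof. exact: lt0r_neq0 N_gt0. Qed.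

Lemma theta0 : theta 0 = N.
Proof. rewrite /theta /=; ring. Qed.

Lemma theta1 : theta 1 = 0.
Proof. rewrite /theta /=; ring. Qed.

Lemma dimP1 : \dim {:P1} = 2%N.
Proof. exact: dim_polyn. Qed.

Definition ev (k : nat) (f : P1) : R := (polyn f).[theta k].

Lemma evD k f g : ev k (f + g) = ev k f + ev k g.
Proof. by rewrite /ev raddfD hornerD. Qed.

Lemma evZ k a f : ev k (a *: f) = a * ev k f.
Proof. by rewrite /ev linearZ hornerZ. Qed.

Lemma ev_inj f g : ev 0 f = ev 0 g -> ev 1 f = ev 1 g -> f = g.
Proof.
move=> e0 e1; apply/val_inj/eqP; rewrite -subr_eq0; apply/eqP.
apply: (@roots_geq_poly_eq0 _ _ [:: theta 0; theta 1]).
- by move: e0 e1; rewrite /ev /= /root !hornerD !hornerN => -> ->; rewrite !subrr eqxx.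
- by rewrite /= mem_seq1 theta0 theta1 N_neq0.
- by rewrite (leq_trans (size_polyD _ _)) // geq_max size_polyN !size_npoly.
Qed.

Lemma interpE (v : nat -> R) :
  polyn (interp r s 1 v) = (v 1%N)%:P + ((v 0%N - v 1%N) / N) *: 'X.
Proof.
have lagrangeE : \sum_(i < 2) v i *: \prod_(j < 2 | j != i)
     ((theta i - theta j)^-1 *: ('X - (theta j)%:P))
   = (v 1%N)%:P + ((v 0%N - v 1%N) / N) *: 'X.
  rewrite (big_ord_recl 1) big_ord1 /=.
  rewrite big_mkcond big_ord_recl big_ord1 /=.
  rewrite big_mkcond big_ord_recl big_ord1 /=.
  rewrite !mul1r !mulr1 theta0 theta1.
  apply/polyP=> i; rewrite !(coefD, coefZ, coefN, coefX, coefC) /bump /=.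
  by have := N_neq0 => ?; case: i => [|[|i]] /=; field.
rewrite /interp lagrangeE npolypK //.
rewrite (leq_trans (size_polyD _ _)) // geq_max (leq_trans (size_polyC_leq1 _)) //.
by rewrite (leq_trans (size_scale_leq _ _)) // size_polyX.
Qed.

Lemma ev0_interp v : ev 0 (interp r s 1 v) = v 0%N.
Proof.
rewrite /ev interpE theta0 hornerD hornerC hornerZ hornerX.
by have := N_neq0 => ?; field.
Qed.

Lemma ev1_interp v : ev 1 (interp r s 1 v) = v 1%N.
Proof. by rewrite /ev interpE theta1 hornerD hornerC hornerZ hornerX mulr0 addr0. Qed.

Definition interp2 (a b : R) : P1 := interp r s 1 (fun i => if i == 0%N then a else b).

Lemma ev0_interp2 a b : ev 0 (interp2 a b) = a. Proof. exact: ev0_interp. Qed.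
Lemma ev1_interp2 a b : ev 1 (interp2 a b) = b. Proof. exact: ev1_interp. Qed.

Lemma bs0 : bs r s 1 0 = - p.
Proof.
rewrite /bs /poch /= big_ord0 big_ord1 /=.
by have := N_neq0 => ?; field.
Qed.

Lemma cs1 : cs r s 1 1 = - q.
Proof.
rewrite /cs /poch /= big_ord0 big_ord1 /=.
by have := N_neq0 => ?; field.
Qed.

Lemma as0 : as_ r s 1 0 = p.
Proof. by rewrite /as_ bs0 /cs /thetas subr0 sub0r opprK. Qed.

Lemma as1 : as_ r s 1 1 = q.
Proof. by rewrite /as_ cs1 /bs /thetas subr0 sub0r opprK. Qed.

Lemma interp_linear (F : P1 -> nat -> R) :
  (forall k a u w, F (a *: u + w) k = a * F u k + F w k) ->
  linear (fun f => interp r s 1 (F f)).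
Proof.
move=> F_lin a u w; apply: ev_inj;
  by rewrite evD evZ ?ev0_interp ?ev1_interp F_lin.
Qed.

Lemma LopE f : Lop r s 1 f = interp r s 1 (fun i => theta i * ev i f).
Proof.
apply: (linfunE_linear (@interp_linear (fun f i => _) _)).
by move=> k a u w /=; rewrite hornerD hornerZ; ring.
Qed.

Lemma ev0_Lop f : ev 0 (Lop r s 1 f) = N * ev 0 f.
Proof. by rewrite LopE ev0_interp {1}theta0. Qed.

Lemma ev1_Lop f : ev 1 (Lop r s 1 f) = 0.
Proof. by rewrite LopE ev1_interp theta1 mul0r. Qed.

Lemma LsopE f : Lsop r s 1 f = interp r s 1 (fun i =>
     (if (i < 1)%N then bs r s 1 i * ev i.+1 f else 0)
     + as_ r s 1 i * ev i f
     + (if (0 < i)%N then cs r s 1 i * ev i.-1 f else 0)).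
Proof.
apply: (linfunE_linear (@interp_linear (fun f i => _) _)).
by move=> [|k] a u w /=; rewrite !hornerD !hornerZ; ring.
Qed.

Lemma ev0_Lsop f : ev 0 (Lsop r s 1 f) = p * (ev 0 f - ev 1 f).
Proof. by rewrite LsopE ev0_interp /= bs0 as0; ring. Qed.

Lemma ev1_Lsop f : ev 1 (Lsop r s 1 f) = q * (ev 1 f - ev 0 f).
Proof. by rewrite LsopE ev1_interp /= cs1 as1; ring. Qed.

Lemma Lsop_idem : (Lsop r s 1 \o Lsop r s 1 = Lsop r s 1)%VF.
Proof.
have := N_neq0 => ?; apply/lfunP => f; rewrite comp_lfunE.
by apply: ev_inj; rewrite ?(ev0_Lsop, ev1_Lsop); field.
Qed.

Lemma basis_pair_ev (u0 u1 : P1) :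
  ev 0 u0 * ev 1 u1 != ev 1 u0 * ev 0 u1 -> basis_of fullv (pair_tuple dimP1 u0 u1).
Proof.
rewrite -subr_eq0; set D := _ - _ => D_neq0.
rewrite basisEdim size_tuple leqnn andbT; apply/subvP => v _.
have -> : v = ((ev 0 v * ev 1 u1 - ev 1 v * ev 0 u1) / D) *: u0
             + ((ev 0 u0 * ev 1 v - ev 1 u0 * ev 0 v) / D) *: u1.
  by apply: ev_inj; rewrite evD !evZ /D; field.
by rewrite memvD // memvZ // memv_span // !inE eqxx ?orbT.
Qed.

Ltac ev_eq := apply: ev_inj;
  rewrite ?(add_lfunE, scale_lfunE, id_lfunE, evD, evZ, ev0_Lop, ev1_Lop,
            ev0_Lsop, ev1_Lsop, ev0_interp2, ev1_interp2);
  have := N_neq0 => ?; field.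

Definition delta_basis := pair_tuple dimP1 (interp2 1 0) (interp2 0 1).

(* The constant 1 spans the kernel of L*, and the vector with values
   (1 + s, -(1 + r)) is fixed by L*. *)
Definition eigen_basis := pair_tuple dimP1 (interp2 1 1) (interp2 (1 + s) (- (1 + r))).

Lemma delta_basis_is_basis : basis_of fullv delta_basis.
Proof.
by apply: basis_pair_ev; rewrite !(ev0_interp2, ev1_interp2) mulr0 mulr1 oner_neq0.
Qed.

Lemma eigen_basis_is_basis : basis_of fullv eigen_basis.
Proof.
apply: basis_pair_ev; rewrite !(ev0_interp2, ev1_interp2) !mul1r.
by rewrite lt_eqF // (lt_trans _ s1_gt0) // oppr_lt0 r1_gt0.
Qed.

Lemma leonard_pair_Lop_affine_Lsop (c a : R) :
  c != 0 -> leonard_pair (Lop r s 1) (c *: Lsop r s 1 + a *: \1)%VF.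
Proof.
move=> c_neq0; split; first by rewrite dimP1.
split.
- have delta_free := basis_free delta_basis_is_basis.
  exists delta_basis; split; first exact: delta_basis_is_basis.
  split.
  + apply: (is_diag_mxof_pair_tuple delta_free (F := Lop r s 1) (a0 := N) (a1 := 0));
      by ev_eq.
  + apply: (irr_tridiag_mxof_pair_tuple delta_free (F := (c *: Lsop r s 1 + a *: \1)%VF)
      (a00 := c * p + a) (a01 := - (c * q)) (a10 := - (c * p)) (a11 := c * q + a)).
    * by ev_eq.
    * by ev_eq.
    * by rewrite oppr_eq0 mulf_neq0 // (lt0r_neq0 q_gt0).
    * by rewrite oppr_eq0 mulf_neq0 // (lt0r_neq0 p_gt0).
- have eigen_free := basis_free eigen_basis_is_basis.
  exists eigen_basis; split; first exact: eigen_basis_is_basis.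
  split.
  + apply: (is_diag_mxof_pair_tuple eigen_free (F := (c *: Lsop r s 1 + a *: \1)%VF)
      (a0 := a) (a1 := c + a)); by ev_eq.
  + apply: (irr_tridiag_mxof_pair_tuple eigen_free (F := Lop r s 1)
      (a00 := 1 + r) (a01 := 1) (a10 := (1 + s) * (1 + r)) (a11 := 1 + s)).
    * by ev_eq.
    * by ev_eq.
    * exact: oner_neq0.
    * by rewrite mulf_neq0 // lt0r_neq0 ?r1_gt0 ?s1_gt0.
Qed.

End DegreeOne.

Theorem corollary2p10 (R : realType) (r s : R) (hr : -1 < r) (hs : -1 < s)
    (lam : R) :
  let d := 1%N in
  let M := (Lsop r s d + lam *: \1)%VF in
  leonard_pair (Lop r s d) (M \o M)%VF <-> 2 * lam != -1.
Proof.
move=> d M; rewrite /M sqr_add_scalar_idem ?Lsop_idem //.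
have -> : (2 * lam != -1) = (1 + 2 * lam != 0).
  by rewrite addrC -subr_eq0 opprK.
split => [[_ [[e [e_basis [_ M_irr]]] _]] | ]; last exact: leonard_pair_Lop_affine_Lsop.
apply/negP => /eqP c_eq0; move: M_irr; rewrite c_eq0 scale0r add0r.
by apply: scalar_lfun_not_irr_tridiag (basis_free e_basis) _; rewrite dimP1.
Qed.
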